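(* Let $H$ be a real Hilbert space, $M\ge 1$, $I=\{1,\dots,M\}$, and let $f_i,h_i,T_i$ ($i\in I$) satisfy Assumption (A1)–(A4) below, with parameter sequences $\{\theta_n\},\{\lambda_n\},\{\beta_n\},\{\alpha_n\}$ satisfying Condition (C) below. Suppose that for each $i\in I$, $X_i\subset H$ is a bounded, closed and convex set with $S\subset X_i$, where $S=\bigcap_{i=1}^M \mathrm{Fix}\,T_i$. Consider the Distributed Accelerated Incremental Algorithm described below, modified in one of the following two ways: either the step defining $y^{(i)}_n$ is replaced by $$y^{(i)}_{n}=P_{X_{i}}\big(\mathrm{prox}_{\lambda_{n}f_{i}}(z^{(i)}_{n}+\lambda_{n}d^{(i)}_{n+1})\big),$$ or the step defining $w^{(i+1)}_n$ is replaced by $$w^{(i+1)}_{n}=P_{X_{i}}\big(\alpha_{n}u^{(i)}+(1-\alpha_{n})T_{i}(y^{(i)}_{n})\big),$$ where $P_{X_i}$ denotes the metric projection onto $X_i$. Then for each $i\in I$ the sequence $\{y^{(i)}_n\}$ generated by the resulting algorithm is bounded.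
   Context: Assumption (A1): each $f_i:H\to\mathbb{R}$ is continuous and convex. (A2): each $h_i:H\to\mathbb{R}$ is convex and Fréchet differentiable, and $\nabla h_i$ is $(1/L_i)$-Lipschitz continuous for some $L_i>0$. (A3): each $T_i:H\to H$ is firmly nonexpansive, i.e. $\|T_ix-T_iy\|^2\le\langle T_ix-T_iy,x-y\rangle$ for all $x,y$. (A4): $S=\bigcap_{i=1}^M\mathrm{Fix}\,T_i\neq\emptyset$ (where $\mathrm{Fix}\,T_i=\{y:T_iy=y\}$) and, with $\psi=\sum_{i=1}^M(f_i+h_i)$, the set $\Omega=\{\hat x\in S:\psi(\hat x)=\min_{x\in S}\psi(x)\}$ is nonempty. Condition (C): $\{\theta_n\},\{\lambda_n\},\{\beta_n\},\{\alpha_n\}$ are decreasing real sequences converging to $0$ with $\theta_n\in[0,1)$, $\lambda_n\in(0,2\min_{i\in I}L_i]$, $\beta_n\in(0,1]$, $\alpha_n\in(0,1]$, and: (C1) $\sum_n\alpha_n=\infty$; (C2) $\lim_n\frac{1}{\alpha_{n+1}}\big|\frac{1}{\lambda_{n+1}}-\frac{1}{\lambda_n}\big|=0$; (C3) $\lim_n\frac{1}{\lambda_{n+1}}\big|1-\frac{\alpha_n}{\alpha_{n+1}}\big|=0$; (C4) $\lim_n\frac{\alpha_n}{\lambda_n}=0$; (C5) $\lim_n\frac{\theta_n}{\alpha_{n+1}\lambda_{n+1}}=0$; (C6) $\frac{\lambda_n}{\lambda_{n+1}}\le\sigma$ for some $\sigma\ge1$ and all $n$; (C7) $\lim_n\frac{\beta_n}{\alpha_{n+1}}=0$.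 For proper lsc convex $g$ and $\lambda>0$, $\mathrm{prox}_{\lambda g}(x)=\arg\min_y\{g(y)+\frac{1}{2\lambda}\|x-y\|^2\}$. Distributed Accelerated Incremental Algorithm: choose $x_1\in H$, $w^{(i)}_0,z^{(i)}_0,u^{(i)}\in H$ and set $d^{(i)}_1=-\nabla h_i(z^{(i)}_0)$ ($i\in I$). For $n=1,2,\dots$: set $w^{(1)}_n=x_n$; for $i=1,\dots,M$ compute $z^{(i)}_n=w^{(i)}_n+\theta_n(w^{(i)}_n-w^{(i)}_{n-1})$, $d^{(i)}_{n+1}=-\nabla h_i(z^{(i)}_n)+\beta_nd^{(i)}_n$, $y^{(i)}_n=\mathrm{prox}_{\lambda_nf_i}(z^{(i)}_n+\lambda_nd^{(i)}_{n+1})$, $w^{(i+1)}_n=\alpha_nu^{(i)}+(1-\alpha_n)T_i(y^{(i)}_n)$; then set $x_{n+1}=w^{(M+1)}_n$. *)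

(* real Hilbert space modelled as a complete normed
   module over a realType together with an inner product inducing its norm. *)
From HB Require Import structures.
From mathcomp Require Import all_boot all_order all_algebra.
From mathcomp Require Import all_classical all_reals all_analysis.
Set Implicit Arguments. Unset Strict Implicit. Unset Printing Implicit Defensive.
Import Order.TTheory GRing.Theory Num.Theory.
Import numFieldNormedType.Exports.
Local Open Scope classical_set_scope.
Local Open Scope ring_scope.

Section Defs.
Context {R : realType} {V : normedModType R}.

Definition inner_product (ip : V -> V -> R) : Prop :=
  [/\ (forall x y, ip x y = ip y x),
      (forall x y z, ip (x + y) z = ip x z + ip y z),
      (forall (a : R) x y, ip (a *: x) y = a * ip x y) &
      (forall x, ip x x = `|x| ^+ 2)].

Definition frechet_gradient (ip : V -> V -> R) (h : V -> R) (g : V -> V) : Prop :=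
  forall x (e : R), 0 < e -> exists2 d : R, 0 < d &
    forall v, `|v| < d -> `|h (x + v) - h x - ip (g x) v| <= e * `|v|.

Definition lipschitz_with (K : R) (g : V -> V) : Prop :=
  forall x y, `|g x - g y| <= K * `|x - y|.

Definition firmly_nonexpansive (ip : V -> V -> R) (T : V -> V) : Prop :=
  forall x y, `|T x - T y| ^+ 2 <= ip (T x - T y) (x - y).

Definition Fix (T : V -> V) : set V := [set y | T y = y].

Definition is_prox (lam : R) (f : V -> R) (x p : V) : Prop :=
  forall y, f p + `|x - p| ^+ 2 / (2 * lam) <= f y + `|x - y| ^+ 2 / (2 * lam).

Definition is_metric_proj (X : set V) (x p : V) : Prop :=
  X p /\ forall y, X y -> `|x - p| <= `|x - y|.

Definition norm_bounded_set (X : set V) : Prop :=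
  exists B : R, forall x, X x -> `|x| <= B.

End Defs.

(* In the variant projecting y^(i)_n onto X_i the claim is immediate, X_i being
   bounded.  In the variant projecting w^(i+1)_n, every w^(i)_n lies (for n >= 2)
   in some X_k, so the w^(i)_n, hence the extrapolated points z^(i)_n, are bounded.
   The gradients at z^(i)_n are then bounded by Lipschitz continuity, and the
   recursion d_(n+1) = -grad h(z_n) + beta_n d_n with beta_n -> 0 keeps the
   directions bounded.  Finally, a continuous convex f admits a minorant
   f 0 - K |p|, which forces prox_(lambda f)(a) to stay bounded when a and
   lambda do. *)

From HB Require Import structures.
From mathcomp Require Import all_boot all_order all_algebra.
From mathcomp Require Import all_classical all_reals all_analysis.
From mathcomp Require Import ring lra zify.
Import Order.TTheory GRing.Theory Num.Theory.
Import numFieldNormedType.Exports.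
Local Open Scope classical_set_scope.
Local Open Scope ring_scope.

Section bounded_sequences.
Context {R : realFieldType}.

Lemma bounded_seq_from (r : nat -> R) (N : nat) (B : R) :
  (forall n, (N <= n)%N -> r n <= B) -> exists B', forall n, r n <= B'.
Proof.
move=> rB; exists (Num.max B (\big[Num.max/0]_(k < N) r k)) => n.
have [nN|Nn] := ltnP n N; last by rewrite le_max rB.
by rewrite le_max (le_bigmax _ _ (Ordinal nN)) orbT.
Qed.

Lemma bounded_perturbed_recursion (r b : nat -> R) (G : R) (N : nat) :
  (forall n, 0 <= r n) -> b @ \oo --> 0 ->
  (forall n, (N <= n)%N -> r n.+1 <= G + `|b n| * r n) ->
  exists D, forall n, r n <= D.
Proof.
move=> r0 /cvgrPdist_lt /(_ 2^-1) [|N' _ b_small rec]; first by rewrite invr_gt0.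
pose N0 := maxn N N'.
apply: (@bounded_seq_from _ N0 (Num.max (r N0) (2 * `|G|))).
suff rD k : r (N0 + k)%N <= Num.max (r N0) (2 * `|G|) by move=> n /subnKC <-.
elim: k => [|k IH]; first by rewrite addn0 le_max lexx.
have bk : `|b (N0 + k)%N| <= 2^-1.
  apply/ltW; have := b_small (N0 + k)%N; rewrite sub0r normrN; apply => /=.
  exact: leq_trans (leq_maxr N N') (leq_addr k _).
have GD : 2 * `|G| <= Num.max (r N0) (2 * `|G|) by rewrite le_max lexx orbT.
rewrite addnS; apply: le_trans (rec _ _) _.
  exact: leq_trans (leq_maxl N N') (leq_addr k _).
have : `|b (N0 + k)%N| * r (N0 + k)%N <= 2^-1 * Num.max (r N0) (2 * `|G|).
  by apply: ler_pM => //; exact: r0.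
have := ler_norm G; lra.
Qed.

End bounded_sequences.

Section convex_lower_bound.
Context {R : realFieldType} {V : normedModType R} {f : V -> R}.
Hypothesis f_convex : convex_function setT f.

Lemma convex_functionT_le (t : R) (x y : V) : 0 <= t -> t <= 1 ->
  f (t *: x + (1 - t) *: y) <= t * f x + (1 - t) * f y.
Proof.
move=> t0 t1; have := f_convex (Itv01 t0 t1) x y (in_setT _) (in_setT _).
by rewrite [X in f X]/conv /= convRE.
Qed.

Lemma convex_ge_linear (r : R) : 0 < r ->
  (forall v, `|v| = r -> f v <= f 0 + 1) -> forall p, f 0 - `|p| / r <= f p.
Proof.
move=> r0 f_sphere p; have [->|p0] := eqVneq p 0; first by rewrite normr0 mul0r subr0.
have np0 : 0 < `|p| by rewrite normr_gt0.
pose t := r / (`|p| + r).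
have t0 : 0 < t by rewrite divr_gt0 // addr_gt0.
have t1 : t <= 1 by rewrite ler_pdivrMr ?addr_gt0 // mul1r lerDr ltW.
pose v := - (r / `|p|) *: p.
have nv : `|v| = r.
  by rewrite normrZ normrN ger0_norm ?divr_ge0 ?ltW // divfK // gt_eqF.
(* 0 splits as a convex combination of p and the point v of norm r opposite to p *)
have tpv : t *: p + (1 - t) *: v = 0.
  rewrite /v scalerA -scalerDl.
  suff -> : t + (1 - t) * - (r / `|p|) = 0 by rewrite scale0r.
  by rewrite /t; field; rewrite !gt_eqF // addr_gt0.
have := convex_functionT_le t p v (ltW t0) t1; rewrite tpv => conv_ineq.
have t_ratio : t * (`|p| / r) = 1 - t by rewrite /t; field; rewrite !gt_eqF // addr_gt0.
rewrite -(ler_pM2l t0) mulrBr t_ratio.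
have := f_sphere v nv; have : 0 <= 1 - t by lra.
nra.
Qed.

Lemma continuous_convex_ge_linear : {for 0, continuous f} ->
  exists2 K, 0 <= K & forall p, f 0 - K * `|p| <= f p.
Proof.
move=> /cvgrPdist_lt /(_ 1 ltr01) /nbhs_norm0P [e e0 f_near0].
have e2 : 0 < e / 2 by rewrite divr_gt0.
exists (e / 2)^-1; first by rewrite invr_ge0 ltW.
move=> p; rewrite mulrC; apply: convex_ge_linear => // v nv.
have : `|f 0 - f v| < 1 by apply: f_near0; rewrite /= nv ltr_pdivrMr // ltr_pMr // ltr1n.
have := ler_norm (f v - f 0); rewrite distrC; lra.
Qed.

End convex_lower_bound.

Lemma lipschitz_norm_le {R : realType} {V : normedModType R} {K : R} {g : V -> V}
    (x : V) :
  lipschitz_with K g -> `|g x| <= `|g 0| + K * `|x|.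
Proof.
move=> g_lip; have := g_lip x 0; rewrite subr0 => gx.
by rewrite -(subrK (g 0) (g x)) addrC; apply: le_trans (ler_normD _ _) _; rewrite lerD2l.
Qed.

Lemma is_prox_norm_le {R : realType} {V : normedModType R} {f : V -> R}
    {lam K A : R} {a p : V} :
  0 < lam -> 0 <= K -> (forall q, f 0 - K * `|q| <= f q) -> `|a| <= A ->
  is_prox lam f a p -> `|p| <= 2 * (A + lam * K).
Proof.
move=> lam0 K0 f_ge aA p_prox.
(* compare p with the competitor 0 in the prox problem *)
have dist_sqr : `|a - p| ^+ 2 <= `|a| ^+ 2 + 2 * lam * K * `|p|.
  have := p_prox 0; rewrite subr0 => h.
  have lam2 : 0 < 2 * lam by rewrite mulr_gt0.
  move: h; rewrite -(ler_pM2l lam2) !mulrDr !(mulrC (2 * lam) (_ / _)) !divfK ?gt_eqF //.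
  have := f_ge p; have : 0 <= 2 * lam by rewrite ltW.
  nra.
have rev_tri : `|p| - `|a| <= `|a - p|.
  by rewrite distrC; apply: le_trans (ler_norm _) (ler_dist_dist p a).
have := normr_ge0 a; have : 0 <= lam * K by rewrite mulr_ge0 // ltW.
have [pa|ap] := leP `|p| `|a|; first lra.
move: dist_sqr rev_tri; rewrite !expr2; nra.
Qed.

Section prox_gradient_iterates.
Context {R : realType} {V : normedModType R}.
Variables (f : V -> R) (g : V -> V) (K : R) (theta lambda beta : nat -> R).
Variables (Lam W : R) (w z d y : nat -> V).
Hypotheses (f_cont : continuous f) (f_convex : convex_function setT f).
Hypotheses (K_ge0 : 0 <= K) (g_lip : lipschitz_with K g).
Hypothesis theta01 : forall n, (1 <= n)%N -> 0 <= theta n <= 1.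
Hypothesis lambda_bounds : forall n, (1 <= n)%N -> 0 < lambda n <= Lam.
Hypothesis beta_cvg0 : beta @ \oo --> 0.
Hypothesis w_bounded : forall n, `|w n| <= W.
Hypothesis zE : forall n, (1 <= n)%N -> z n = w n + theta n *: (w n - w n.-1).
Hypothesis dE : forall n, (1 <= n)%N -> d n.+1 = - g (z n) + beta n *: d n.
Hypothesis y_prox :
  forall n, (1 <= n)%N -> is_prox (lambda n) f (z n + lambda n *: d n.+1) (y n).

Lemma extrapolation_norm_le n : (1 <= n)%N -> `|z n| <= 3 * W.
Proof.
move=> n1; have /andP[th0 th1] := theta01 n n1; rewrite zE //.
apply: le_trans (ler_normD _ _) _; rewrite normrZ ger0_norm //.
have := ler_normB (w n) (w n.-1); have := w_bounded n; have := w_bounded n.-1.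
have : 0 <= `|w n - w n.-1| by [].
nra.
Qed.

Lemma direction_bounded : exists D, forall n, `|d n| <= D.
Proof.
apply: (@bounded_perturbed_recursion _ _ beta (`|g 0| + K * (3 * W)) 1) => // n n1.
rewrite /= dE //; apply: le_trans (ler_normD _ _) _; rewrite normrN normrZ lerD2r.
apply: le_trans (lipschitz_norm_le (z n) g_lip) _.
by rewrite lerD2l ler_wpM2l // extrapolation_norm_le.
Qed.

Lemma prox_iterates_bounded : exists B, forall n, (1 <= n)%N -> `|y n| <= B.
Proof.
have [D d_bounded] := direction_bounded.
have [Kf Kf0 f_ge] := continuous_convex_ge_linear f_convex (f_cont 0).
exists (2 * (3 * W + Lam * D + Lam * Kf)) => n n1.
have /andP[lam0 lamL] := lambda_bounds n n1.
have arg_bounded : `|z n + lambda n *: d n.+1| <= 3 * W + Lam * D.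
  apply: le_trans (ler_normD _ _) _; rewrite normrZ gtr0_norm //.
  by rewrite lerD ?extrapolation_norm_le // ler_pM // ltW.
apply: le_trans (is_prox_norm_le lam0 Kf0 f_ge arg_bounded (y_prox n n1)) _.
by rewrite ler_pM2l // lerD2l ler_wpM2r.
Qed.

End prox_gradient_iterates.

Lemma incremental_iterates_eventually_in {V : Type} {M : nat} {X : nat -> set V}
    {x : nat -> V} {w : nat -> nat -> V} :
  (1 <= M)%N ->
  (forall n, (1 <= n)%N -> w n 1%N = x n) ->
  (forall n, (1 <= n)%N -> x n.+1 = w n M.+1) ->
  (forall n i, (1 <= n)%N -> (1 <= i <= M)%N -> X i (w n i.+1)) ->
  forall i, (1 <= i <= M)%N ->
    exists2 k, (1 <= k <= M)%N & forall n, (2 <= n)%N -> X k (w n i).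
Proof.
move=> M_ge1 w_1 x_next w_in [//|[|j]] hi.
  have hM : (1 <= M <= M)%N by rewrite M_ge1 leqnn.
  exists M => // [[//|n] n1].
  by rewrite w_1 // x_next //; apply: w_in.
have hj : (1 <= j.+1 <= M)%N by move: hi; lia.
by exists j.+1 => // [[//|n] n1]; apply: w_in.
Qed.

Theorem lemma1
  (R : realType) (H : completeNormedModType R) (ip : H -> H -> R)
  (M : nat)
  (f h : nat -> H -> R) (gradh : nat -> H -> H) (L : nat -> R)
  (T : nat -> H -> H) (X : nat -> set H)
  (theta lambda beta alpha : nat -> R) (sigma : R)
  (x : nat -> H) (w z d y : nat -> nat -> H) (u : nat -> H)
  (modif : bool) :
  inner_product ip ->
  (1 <= M)%N ->
  (* (A1) *)
  (forall i, (1 <= i <= M)%N -> continuous (f i) /\ convex_function setT (f i)) ->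
  (* (A2) *)
  (forall i, (1 <= i <= M)%N ->
     [/\ convex_function setT (h i), frechet_gradient ip (h i) (gradh i),
         0 < L i & lipschitz_with (L i)^-1 (gradh i)]) ->
  (* (A3) *)
  (forall i, (1 <= i <= M)%N -> firmly_nonexpansive ip (T i)) ->
  (* (A4) *)
  let S := [set p | forall i, (1 <= i <= M)%N -> Fix (T i) p] in
  let psi := fun p => \sum_(1 <= i < M.+1) (f i p + h i p) in
  (exists2 p0, S p0 & forall q, S q -> psi p0 <= psi q) ->
  (* Condition (C) *)
  (forall n, (1 <= n)%N ->
     [/\ theta n.+1 <= theta n, lambda n.+1 <= lambda n,
         beta n.+1 <= beta n & alpha n.+1 <= alpha n]) ->
  theta @ \oo --> 0 -> lambda @ \oo --> 0 -> beta @ \oo --> 0 -> alpha @ \oo --> 0 ->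
  (forall n, (1 <= n)%N ->
     [/\ 0 <= theta n < 1,
         0 < lambda n /\ (forall i, (1 <= i <= M)%N -> lambda n <= 2 * L i),
         0 < beta n <= 1 & 0 < alpha n <= 1]) ->
  (* (C1) *)
  (fun n => \sum_(1 <= k < n.+1) alpha k) @ \oo --> +oo ->
  (* (C2) *)
  (fun n => (alpha n.+1)^-1 * `|(lambda n.+1)^-1 - (lambda n)^-1|) @ \oo --> 0 ->
  (* (C3) *)
  (fun n => (lambda n.+1)^-1 * `|1 - alpha n / alpha n.+1|) @ \oo --> 0 ->
  (* (C4) *)
  (fun n => alpha n / lambda n) @ \oo --> 0 ->
  (* (C5) *)
  (fun n => theta n / (alpha n.+1 * lambda n.+1)) @ \oo --> 0 ->
  (* (C6) *)
  1 <= sigma -> (forall n, (1 <= n)%N -> lambda n / lambda n.+1 <= sigma) ->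
  (* (C7) *)
  (fun n => beta n / alpha n.+1) @ \oo --> 0 ->
  (* the sets X_i *)
  (forall i, (1 <= i <= M)%N ->
     [/\ norm_bounded_set (X i), closed (X i), convex_set (X i) & S `<=` X i]) ->
  (* the (modified) Distributed Accelerated Incremental Algorithm *)
  (forall i, (1 <= i <= M)%N -> d 1%N i = - gradh i (z 0%N i)) ->
  (forall n, (1 <= n)%N -> w n 1%N = x n) ->
  (forall n i, (1 <= n)%N -> (1 <= i <= M)%N ->
     [/\ z n i = w n i + theta n *: (w n i - w n.-1 i),
         d n.+1 i = - gradh i (z n i) + beta n *: d n i &
         if modif then
           (exists2 p, is_prox (lambda n) (f i) (z n i + lambda n *: d n.+1 i) p
                     & is_metric_proj (X i) p (y n i)) /\
           w n i.+1 = alpha n *: u i + (1 - alpha n) *: T i (y n i)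
         else
           is_prox (lambda n) (f i) (z n i + lambda n *: d n.+1 i) (y n i) /\
           is_metric_proj (X i) (alpha n *: u i + (1 - alpha n) *: T i (y n i))
                          (w n i.+1)]) ->
  (forall n, (1 <= n)%N -> x n.+1 = w n M.+1) ->
  forall i, (1 <= i <= M)%N ->
    exists B : R, forall n, (1 <= n)%N -> `|y n i| <= B.
Proof.
move=> _ M_ge1 A1 A2 _ S psi _ mono _ _ beta_cvg0 _ params _ _ _ _ _ _ _ _ X_props _
  w_1 alg x_next i hi.
case: modif alg => alg.
  have [[By y_bounded] _ _ _] := X_props i hi.
  exists By => n n1; have [_ _ [[_ _ [y_in _]] _]] := alg n i n1 hi.
  exact: y_bounded.
have w_proj n j : (1 <= n)%N -> (1 <= j <= M)%N -> X j (w n j.+1).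
  by move=> n1 hj; have [_ _ [_ []]] := alg n j n1 hj.
have [k hk w_in] := incremental_iterates_eventually_in M_ge1 w_1 x_next w_proj i hi.
have [[Bw w_bounded] _ _ _] := X_props k hk.
have [W w_le] := @bounded_seq_from _ (fun n => `|w n i|) 2 Bw
  (fun n n2 => w_bounded _ (w_in n n2)).
have [f_cont f_convex] := A1 i hi.
have [_ _ L_gt0 grad_lip] := A2 i hi.
have /nonincreasing_seqP lambda_dec : forall n, lambda n.+2 <= lambda n.+1.
  by move=> n; have [] := mono n.+1 isT.
apply: (prox_iterates_bounded (f i) (gradh i) (L i)^-1 theta lambda beta
  (lambda 1%N) W (w^~ i) (z^~ i) (d^~ i) (y^~ i) f_cont f_convex _ grad_lip) => //.
- by rewrite invr_ge0 ltW.
- move=> n n1; have [/andP[theta0 theta1] _ _ _] := params n n1.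
  by rewrite theta0 ltW.
- case=> [//|n] n1; have [_ [lam0 _] _ _] := params n.+1 n1.
  by rewrite lam0 (lambda_dec 0%N n).
- by move=> n n1; have [] := alg n i n1 hi.
- by move=> n n1; have [] := alg n i n1 hi.
- by move=> n n1; have [_ _ []] := alg n i n1 hi.
Qed.
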